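(* Let $p(x,y)\in\mathbb{C}[x,y]$ be a nonzero homogeneous polynomial with $p(1,0)\neq0$, and let $\mathcal{Z}$ be the set of distinct complex roots of $p(x,1)$. Suppose there are five distinct $z_1,z_2,z_3,z_4,z_5\in\mathcal{Z}$ such that both $(z_1,z_2,z_3,z_4)$ and $(z_1,z_2,z_3,z_5)$ are critical with respect to $\mathcal{Z}$. Then every element of $\mathrm{Stab}_{\mathrm{GL}_2(\mathbb{C})}(p(x,y))$ is a scalar matrix (i.e. the image of the stabilizer in $\mathrm{PGL}_2(\mathbb{C})$ is trivial).
   Context: $\mathrm{GL}_2(\mathbb{C})$ acts on $\mathbb{C}[x,y]$ by $A\cdot p(x,y)=p(ax+by,cx+dy)$ for $A=\begin{pmatrix}a&b\\c&d\end{pmatrix}$. The cross ratio of distinct $z_1,z_2,z_3,z_4\in\mathbb{C}$ is $[z_1,z_2,z_3,z_4]=\frac{(z_1-z_3)(z_2-z_4)}{(z_1-z_4)(z_2-z_3)}$. Let $V_4=\{\mathrm{id},(12)(34),(13)(24),(14)(23)\}\subset S_4$. For a set $\mathcal{Z}\subset\mathbb{C}$ with at least four elements, a 4-tuple $\zeta=(z_1,z_2,z_3,z_4)$ of distinct elements of $\mathcal{Z}$ is critical (with respect to $\mathcal{Z}$) if for every 4-tuple $(y_1,y_2,y_3,y_4)$ of distinct elements of $\mathcal{Z}$, $[z_1,z_2,z_3,z_4]=[y_1,y_2,y_3,y_4]$ holds if and only if $(y_1,y_2,y_3,y_4)=(z_{\sigma(1)},z_{\sigma(2)},z_{\sigma(3)},z_{\sigma(4)})$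 for some $\sigma\in V_4$. *)

(* complex numbers as (Stdlib reals)[i] from mathcomp-real-closed,
   bivariate polynomials as multinomials' {mpoly C[2]} ('X_0 = x, 'X_1 = y). *)
From HB Require Import structures.
From mathcomp Require Import all_boot all_order all_algebra.
From mathcomp Require Import Rstruct complex.
From mathcomp Require Export mpoly.
From Stdlib Require Rdefinitions.

Set Implicit Arguments.
Unset Strict Implicit.
Unset Printing Implicit Defensive.

Import Order.TTheory GRing.Theory Num.Theory.
Local Open Scope ring_scope.

Definition C : numClosedFieldType := complex Rdefinitions.R.

Definition pt2 (a b : C) : 'I_2 -> C := fun i => if i == ord0 then a else b.

(* GL_2(C)-action: (A . p)(x, y) = p(a x + b y, c x + d y) for A = [[a, b], [c, d]]. *)
Definition glact (A : 'M[C]_2) (p : {mpoly C[2]}) : {mpoly C[2]} :=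
  comp_mpoly
    [tuple A 0 0 *: 'X_ord0 + A 0 1 *: 'X_ord_max ;
           A 1 0 *: 'X_ord0 + A 1 1 *: 'X_ord_max] p.

Definition rootsZ (p : {mpoly C[2]}) : C -> Prop := fun z => p.@[pt2 z 1] = 0.

Definition cross_ratio (z1 z2 z3 z4 : C) : C :=
  ((z1 - z3) * (z2 - z4)) / ((z1 - z4) * (z2 - z3)).

Definition distinct4 (z1 z2 z3 z4 : C) : Prop :=
  [/\ z1 <> z2, z1 <> z3, z1 <> z4 & [/\ z2 <> z3, z2 <> z4 & z3 <> z4]].

Definition critical (Z : C -> Prop) (z1 z2 z3 z4 : C) : Prop :=
  [/\ Z z1, Z z2, Z z3, Z z4 & distinct4 z1 z2 z3 z4] /\
  forall y1 y2 y3 y4 : C,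
    Z y1 -> Z y2 -> Z y3 -> Z y4 -> distinct4 y1 y2 y3 y4 ->
    (cross_ratio z1 z2 z3 z4 = cross_ratio y1 y2 y3 y4 <->
       [\/ (y1, y2, y3, y4) = (z1, z2, z3, z4),
           (y1, y2, y3, y4) = (z2, z1, z4, z3),
           (y1, y2, y3, y4) = (z3, z4, z1, z2) |
           (y1, y2, y3, y4) = (z4, z3, z2, z1)]).

(* A matrix A = [[a, b], [c, e]] fixing p acts on the roots of p(x, 1) by the
   Möbius map z |-> (a z + b) / (c z + e): homogeneity and p(1, 0) != 0 keep the
   denominators nonzero.  The map is injective and preserves cross ratios, so by
   criticality it sends (z1, z2, z3, z4) and (z1, z2, z3, z5) to V_4-permutations
   of themselves.  Only the identity of V_4 is compatible with both, since a
   nontrivial one would identify the images of z4 and z5.  Hence the Möbius map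
   fixes z1, z2, z3, and a Möbius map with three fixed points is the identity,
   i.e. A is scalar. *)
From mathcomp Require Import all_boot all_algebra.
From mathcomp Require Import mpoly ring.

Set Implicit Arguments.
Unset Strict Implicit.
Unset Printing Implicit Defensive.

Import GRing.Theory.
Local Open Scope ring_scope.

Lemma meval_homog_scale (R : comNzRingType) (n d : nat) (p : {mpoly R[n]}) (t : R)
    (v : 'I_n -> R) :
  p \is d.-homog -> p.@[fun i => t * v i] = t ^+ d * p.@[v].
Proof.
move=> /dhomogP p_homog; rewrite !mevalE mulr_sumr !big_seq.
apply: eq_bigr => m /p_homog m_deg; rewrite mulrCA; congr (_ * _).
under eq_bigr do rewrite exprMn.
by rewrite big_split /= prodrXr -m_deg; congr (t ^+ _ * _); apply/esym/mdegE.
Qed.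

Lemma det_mx22 (R : comNzRingType) (A : 'M[R]_2) :
  \det A = A 0 0 * A 1 1 - A 0 1 * A 1 0.
Proof.
rewrite (expand_det_row _ 0) !big_ord_recl big_ord0 /cofactor !det_mx11 !mxE /=.
rewrite addr0 expr0 expr1 mul1r mulN1r mulrN.
by congr (A _ _ * A _ _ - A _ _ * A _ _); apply: val_inj.
Qed.

Lemma meval_pt2_scale (p : {mpoly C[2]}) (d : nat) (t a b : C) :
  p \is d.-homog -> p.@[pt2 (t * a) (t * b)] = t ^+ d * p.@[pt2 a b].
Proof.
move=> p_homog; rewrite -(meval_homog_scale t (pt2 a b) p_homog).
by apply: meval_eq => i; rewrite /pt2; case: (i == ord0).
Qed.

Lemma glact_meval (A : 'M[C]_2) (p : {mpoly C[2]}) (x y : C) :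
  (glact A p).@[pt2 x y] =
  p.@[pt2 (A 0 0 * x + A 0 1 * y) (A 1 0 * x + A 1 1 * y)].
Proof.
rewrite comp_mpoly_meval; apply: meval_eq => -[[|[|//]] i_lt2];
  by rewrite (tnth_nth 0) /= mevalD !mevalZ !mevalXU.
Qed.

Section Mobius.
Variable F : fieldType.
Implicit Types a b c e x y z : F.

Definition mobius a b c e z : F := (a * z + b) / (c * z + e).

Lemma mobiusB a b c e x y : c * x + e != 0 -> c * y + e != 0 ->
  mobius a b c e x - mobius a b c e y =
  (a * e - b * c) * (x - y) / ((c * x + e) * (c * y + e)).
Proof. by move=> x_den y_den; rewrite /mobius; field; rewrite x_den y_den. Qed.

Lemma mobius_inj a b c e x y : a * e - b * c != 0 ->
  c * x + e != 0 -> c * y + e != 0 -> mobius a b c e x = mobius a b c e y -> x = y.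
Proof.
move=> det_neq0 x_den y_den /eqP; rewrite -subr_eq0 mobiusB // !mulf_eq0 invr_eq0.
by rewrite !mulf_eq0 (negPf det_neq0) (negPf x_den) (negPf y_den) !orbF subr_eq0 => /eqP.
Qed.

Lemma quadratic_eq0_of_roots3 (u v w z1 z2 z3 : F) :
  z1 != z2 -> z1 != z3 -> z2 != z3 ->
  u * z1 ^+ 2 + v * z1 + w = 0 -> u * z2 ^+ 2 + v * z2 + w = 0 ->
  u * z3 ^+ 2 + v * z3 + w = 0 -> [/\ u = 0, v = 0 & w = 0].
Proof.
move=> n12 n13 n23 q1 q2 q3.
rewrite -subr_eq0 in n12; rewrite -subr_eq0 in n13; rewrite -subr_eq0 in n23.
have u0 : u = 0.
  have : u * ((z1 - z2) * (z1 - z3) * (z2 - z3)) =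
    (u * z1 ^+ 2 + v * z1 + w) * (z2 - z3) - (u * z2 ^+ 2 + v * z2 + w) * (z1 - z3)
    + (u * z3 ^+ 2 + v * z3 + w) * (z1 - z2) by ring.
  rewrite q1 q2 q3 !mul0r subrr addr0 => /eqP.
  by rewrite !mulf_eq0 (negPf n12) (negPf n13) (negPf n23) !orbF => /eqP.
have v0 : v = 0.
  have : v * (z1 - z2) = (u * z1 ^+ 2 + v * z1 + w) - (u * z2 ^+ 2 + v * z2 + w)
    - u * (z1 ^+ 2 - z2 ^+ 2) by ring.
  by rewrite q1 q2 u0 mul0r !subrr => /eqP; rewrite mulf_eq0 (negPf n12) orbF => /eqP.
by split=> //; move: q1; rewrite u0 v0 !mul0r !add0r.
Qed.

(* Clearing denominators, a fixed point of the Möbius map is a root of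
   [c z^2 + (e - a) z - b]. *)
Lemma mobius_fix3 a b c e z1 z2 z3 : z1 != z2 -> z1 != z3 -> z2 != z3 ->
  c * z1 + e != 0 -> c * z2 + e != 0 -> c * z3 + e != 0 ->
  mobius a b c e z1 = z1 -> mobius a b c e z2 = z2 -> mobius a b c e z3 = z3 ->
  [/\ c = 0, b = 0 & e = a].
Proof.
move=> n12 n13 n23 den1 den2 den3 fix1 fix2 fix3.
have fixed_root z : c * z + e != 0 -> mobius a b c e z = z ->
    c * z ^+ 2 + (e - a) * z + - b = 0.
  move=> den_z /(canRL (divfK den_z)) fix_z.
  by rewrite -[LHS]subr0 -(subrr (a * z + b)) {1}fix_z; ring.
have [-> ea /eqP] := quadratic_eq0_of_roots3 n12 n13 n23
  (fixed_root _ den1 fix1) (fixed_root _ den2 fix2) (fixed_root _ den3 fix3).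
by rewrite oppr_eq0 => /eqP ->; split=> //; apply/eqP; rewrite -subr_eq0 ea.
Qed.

End Mobius.

Lemma cross_ratio_mobius (a b c e z1 z2 z3 z4 : C) : a * e - b * c != 0 ->
  c * z1 + e != 0 -> c * z2 + e != 0 -> c * z3 + e != 0 -> c * z4 + e != 0 ->
  z1 != z4 -> z2 != z3 ->
  cross_ratio (mobius a b c e z1) (mobius a b c e z2) (mobius a b c e z3)
    (mobius a b c e z4) = cross_ratio z1 z2 z3 z4.
Proof.
move=> det_neq0 den1 den2 den3 den4 n14 n23.
rewrite -subr_eq0 in n14; rewrite -subr_eq0 in n23.
rewrite /cross_ratio !mobiusB //; field.
by rewrite det_neq0 den1 den2 den3 den4 n14 n23.
Qed.

Lemma is_scalar_mx2 (V : nmodType) (A : 'M[V]_2) :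
  A 0 1 = 0 -> A 1 0 = 0 -> A 1 1 = A 0 0 -> is_scalar_mx A.
Proof.
move=> A01 A10 A11; apply/is_scalar_mxP; exists (A 0 0); apply/matrixP.
have ord2 (k : 'I_2) : k = 0 \/ k = 1 by case: k => -[|[|//]] ?; [left|right]; apply: val_inj.
by move=> i j; rewrite mxE; case: (ord2 i) => ->; case: (ord2 j) => ->.
Qed.

Definition V4_image (T : Type) (y1 y2 y3 y4 z1 z2 z3 z4 : T) : Prop :=
  [\/ (y1, y2, y3, y4) = (z1, z2, z3, z4),
      (y1, y2, y3, y4) = (z2, z1, z4, z3),
      (y1, y2, y3, y4) = (z3, z4, z1, z2) |
      (y1, y2, y3, y4) = (z4, z3, z2, z1)].

(* A nontrivial element of V_4 moves 4 to one of 1, 2, 3, so it would send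
   both z4 and z5 to the same point. *)
Lemma V4_images_fix3 (f : C -> C) (z1 z2 z3 z4 z5 : C) :
  distinct4 z1 z2 z3 z4 -> [/\ z5 <> z1, z5 <> z2, z5 <> z3 & z5 <> z4] ->
  f z4 <> f z5 ->
  V4_image (f z1) (f z2) (f z3) (f z4) z1 z2 z3 z4 ->
  V4_image (f z1) (f z2) (f z3) (f z5) z1 z2 z3 z5 ->
  [/\ f z1 = z1, f z2 = z2 & f z3 = z3].
Proof.
move=> [n12 n13 n14 [n23 n24 n34]] [n51 n52 n53 n54] f45.
case=> -[? ? ? ?]; case=> -[? ? ? ?];
  solve [split; assumption | exfalso; congruence].
Qed.

Section Stabilizer.

Variables (p : {mpoly C[2]}) (d : nat) (A : 'M[C]_2).
Hypotheses (p_homog : p \is d.-homog) (p_10 : p.@[pt2 1 0] != 0).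
Hypotheses (A_unit : A \in unitmx) (A_fix_p : glact A p = p).

Local Notation psi := (mobius (A 0 0) (A 0 1) (A 1 0) (A 1 1)).

Lemma stab_det_neq0 : A 0 0 * A 1 1 - A 0 1 * A 1 0 != 0.
Proof. by rewrite -det_mx22 -unitfE -unitmxE. Qed.

Lemma stab_root_meval z :
  rootsZ p z -> p.@[pt2 (A 0 0 * z + A 0 1) (A 1 0 * z + A 1 1)] = 0.
Proof. by rewrite /rootsZ -{1}A_fix_p glact_meval !mulr1. Qed.

(* Otherwise [(A 0 0 * z + A 0 1, 0)] would be a zero of [p], which is ruled
   out by homogeneity and [p(1, 0) != 0]. *)
Lemma stab_root_den_neq0 z : rootsZ p z -> A 1 0 * z + A 1 1 != 0.
Proof.
move=> root_z; apply/eqP => den0.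
have num_neq0 : A 0 0 * z + A 0 1 != 0.
  apply: contra stab_det_neq0 => /eqP num0.
  have -> : A 0 0 * A 1 1 - A 0 1 * A 1 0 =
    A 0 0 * (A 1 0 * z + A 1 1) - A 1 0 * (A 0 0 * z + A 0 1) by ring.
  by rewrite num0 den0 !mulr0 subrr.
have root_num : p.@[pt2 (A 0 0 * z + A 0 1) 0] = 0 by rewrite -den0 stab_root_meval.
have := meval_pt2_scale (A 0 0 * z + A 0 1) 1 0 p_homog.
rewrite mulr1 mulr0 root_num => /esym/eqP.
by rewrite mulf_eq0 expf_eq0 (negPf num_neq0) (negPf p_10) andbF.
Qed.

Lemma stab_mobius_root z : rootsZ p z -> rootsZ p (psi z).
Proof.
move=> root_z; have den_neq0 := stab_root_den_neq0 root_z.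
have := meval_pt2_scale (A 1 0 * z + A 1 1) (psi z) 1 p_homog.
rewrite mulr1 /mobius mulrC divfK // stab_root_meval // => /esym/eqP.
by rewrite mulf_eq0 expf_eq0 (negPf den_neq0) andbF => /eqP.
Qed.

Lemma stab_mobius_inj x y : rootsZ p x -> rootsZ p y -> psi x = psi y -> x = y.
Proof.
by move=> root_x root_y; apply: mobius_inj;
  rewrite ?stab_det_neq0 ?stab_root_den_neq0.
Qed.

Lemma stab_critical z1 z2 z3 z4 : critical (rootsZ p) z1 z2 z3 z4 ->
  V4_image (psi z1) (psi z2) (psi z3) (psi z4) z1 z2 z3 z4.
Proof.
move=> [[r1 r2 r3 r4 [n12 n13 n14 [n23 n24 n34]]] crit].
have psi_neq x y : rootsZ p x -> rootsZ p y -> x <> y -> psi x <> psi y.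
  by move=> rx ry nxy /(stab_mobius_inj rx ry).
have dis_psi : distinct4 (psi z1) (psi z2) (psi z3) (psi z4).
  by do !split; apply: psi_neq.
apply/(crit _ _ _ _ (stab_mobius_root r1) (stab_mobius_root r2)
  (stab_mobius_root r3) (stab_mobius_root r4) dis_psi).
by rewrite cross_ratio_mobius ?stab_det_neq0 ?stab_root_den_neq0 //; apply/eqP.
Qed.

End Stabilizer.

Theorem lemma5p1 (p : {mpoly C[2]}) (d : nat) :
  p != 0 -> p \is d.-homog -> p.@[pt2 1 0] != 0 ->
  forall z1 z2 z3 z4 z5 : C,
    rootsZ p z1 -> rootsZ p z2 -> rootsZ p z3 -> rootsZ p z4 -> rootsZ p z5 ->
    distinct4 z1 z2 z3 z4 ->
    [/\ z5 <> z1, z5 <> z2, z5 <> z3 & z5 <> z4] ->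
    critical (rootsZ p) z1 z2 z3 z4 ->
    critical (rootsZ p) z1 z2 z3 z5 ->
    forall A : 'M[C]_2, A \in unitmx -> glact A p = p -> is_scalar_mx A.
Proof.
move=> _ p_homog p_10 z1 z2 z3 z4 z5 r1 r2 r3 r4 r5 dis n5 crit4 crit5 A A_unit A_fix_p.
have [n12 n13 _ [n23 _ _]] := dis.
have [_ _ _ n54] := n5.
have den := stab_root_den_neq0 p_homog p_10 A_unit A_fix_p.
have psi_inj := stab_mobius_inj p_homog p_10 A_unit A_fix_p.
have crit_img := stab_critical p_homog p_10 A_unit A_fix_p.
have [fix1 fix2 fix3] := V4_images_fix3 dis n5
  (fun psi45 => n54 (esym (psi_inj _ _ r4 r5 psi45))) (crit_img _ _ _ _ crit4)
  (crit_img _ _ _ _ crit5).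
have [c0 b0 ea] := mobius_fix3 (introN eqP n12) (introN eqP n13) (introN eqP n23)
  (den _ r1) (den _ r2) (den _ r3) fix1 fix2 fix3.
exact: is_scalar_mx2.
Qed.
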